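(* Let $f_{\operatorname{base}}$ be a baseline model. Suppose that the function class $\mathcal{F}$ is convex with $\tau^{(s)}\in\mathcal{F}$ for all $s\in\{1,\ldots,S\}$, and that $\mathcal{H}$ is a convex subset of $\Delta_{S-1}$. Let \[ f^*_{\operatorname{rel}}(\cdot;f_{\operatorname{base}})=\underset{f\in\mathcal{F}}{\arg\min}\ \max_{Q\in\mathcal{C}(Q_{\boldsymbol{X}},\mathcal{H})}\ \mathbb{E}_Q\Big[(Y(1)-Y(0)-f(\boldsymbol{X}))^2-(Y(1)-Y(0)-f_{\operatorname{base}}(\boldsymbol{X}))^2\Big]. \] Then \[ f^*_{\operatorname{rel}}(\cdot;f_{\operatorname{base}})=\sum_{s=1}^S q_s^*\,\tau^{(s)}(\cdot)\quad\text{with}\quad \boldsymbol{q}^*=\underset{\boldsymbol{q}\in\mathcal{H}}{\arg\min}\ \mathbb{E}_{Q_{\boldsymbol{X}}}\Big[\sum_{s=1}^S q_s\tau^{(s)}(\boldsymbol{X})-f_{\operatorname{base}}(\boldsymbol{X})\Big]^2. \]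
   Context: Setting: there are $S$ source sites; site $s$ has a joint distribution $P^{(s)}$ of potential outcomes $(Y(1),Y(0))$ (real-valued) and covariates $\boldsymbol{X}\in\mathcal{X}$, with site-specific conditional average treatment effect (CATE) $\tau^{(s)}(\boldsymbol{x})=\mathbb{E}_{P^{(s)}}[Y(1)-Y(0)\mid \boldsymbol{X}=\boldsymbol{x}]$. $Q_{\boldsymbol{X}}$ is a target covariate distribution on $\mathcal{X}$. For a joint distribution $Q$ of $(Y(1),Y(0),\boldsymbol{X})$, $\tau_Q(\boldsymbol{x})=\mathbb{E}_Q[Y(1)-Y(0)\mid\boldsymbol{X}=\boldsymbol{x}]$. $\Delta_{S-1}=\{\boldsymbol{q}\in\mathbb{R}^S:\sum_s q_s=1,\ \min_s q_s\ge 0\}$. For $\mathcal{H}\subseteq\Delta_{S-1}$, the uncertainty set is $\mathcal{C}(Q_{\boldsymbol{X}},\mathcal{H})=\{Q=(Q_{\boldsymbol{X}},Q_{(Y(1),Y(0))\mid\boldsymbol{X}}):\ \tau_Q(\cdot)=\sum_{s=1}^S q_s\tau^{(s)}(\cdot)\text{ for some }\boldsymbol{q}\in\mathcal{H}\}$. *)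

From HB Require Import structures.
From mathcomp Require Import all_boot all_order all_algebra.
From mathcomp Require Import all_classical all_reals all_analysis.
Set Implicit Arguments. Unset Strict Implicit. Unset Printing Implicit Defensive.
Import Order.TTheory GRing.Theory Num.Theory.
Local Open Scope classical_set_scope.
Local Open Scope ring_scope.

Section Defs.
Context {R : realType} {d : measure_display} {X : measurableType d}.

Definition simplex (S : nat) : set ('I_S -> R) :=
  [set q | (forall s, 0 <= q s) /\ \sum_(s < S) q s = 1].

Definition convex_fun_set {I : Type} (A : set (I -> R)) : Prop :=
  forall f g, A f -> A g -> forall t : R, 0 <= t <= 1 ->
    A (fun i => t * f i + (1 - t) * g i).

Definition mix (S : nat) (tau : 'I_S -> X -> R) (q : 'I_S -> R) : X -> R :=
  fun x => \sum_(s < S) q s * tau s x.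

(* A point z = ((Y(1), Y(0)), X) of the joint space; ite z = Y(1) - Y(0). *)
Definition ite (z : (R * R) * X) : R := z.1.1 - z.1.2.

(* tau_Q = g (Q_X-a.e.), i.e. g is a version of E_Q[Y(1)-Y(0) | X]:
   Y(1)-Y(0) is Q-integrable and for every measurable A,
   E_Q[(Y(1)-Y(0)) 1{X in A}] = E_{Q_X}[g(X) 1{X in A}]. *)
Definition has_cate (QX : probability X R) (Q : probability ((R * R) * X)%type R)
  (g : X -> R) : Prop :=
  Q.-integrable setT (fun z => (ite z)%:E) /\
  QX.-integrable setT (fun x => (g x)%:E) /\
  forall A : set X, measurable A ->
    (\int[Q]_(z in snd @^-1` A) (ite z)%:E = \int[QX]_(x in A) (g x)%:E)%E.

Definition uncertainty_set (QX : probability X R) (S : nat)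
  (tau : 'I_S -> X -> R) (H : set ('I_S -> R)) : set (probability ((R * R) * X)%type R) :=
  fun Q : probability ((R * R) * X)%type R =>
          ((forall A : set X, measurable A -> Q (snd @^-1` A) = QX A)
        /\ Q.-integrable setT (fun z => ((ite z) ^+ 2)%:E)
        /\ exists2 q, H q & has_cate QX Q (mix tau q)).

Definition rel_risk (Q : probability ((R * R) * X)%type R) (f fbase : X -> R) : \bar R :=
  (\int[Q]_z (((ite z - f z.2) ^+ 2 - (ite z - fbase z.2) ^+ 2)%:E))%E.

Definition worst_rel_risk (C : set (probability ((R * R) * X)%type R)) (f fbase : X -> R)
  : \bar R := ereal_sup [set rel_risk Q f fbase | Q in C].

End Defs.

From HB Require Import structures.
From mathcomp Require Import all_boot all_order all_algebra.
From mathcomp Require Import all_classical all_reals all_analysis.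
From mathcomp Require Import measurable_realfun ring lra.
Import Order.TTheory GRing.Theory Num.Theory.
Import HBSimple HBNNSimple.
Set Implicit Arguments. Unset Strict Implicit. Unset Printing Implicit Defensive.
Local Open Scope classical_set_scope.
Local Open Scope ring_scope.

(* If Q lies in C(Q_X, H) with CATE g = sum_s q_s tau^(s), then conditioning on X
   turns the relative risk of f into E_{Q_X}[(g - f)^2 - (g - fbase)^2].  For
   fstar = sum_s qstar_s tau^(s) this equals
   -E(fstar - fbase)^2 - 2 E[(g - fstar)(fstar - fbase)],
   and the cross term is nonnegative because qstar minimises a convex quadratic
   over the convex set H; so the worst-case relative risk of fstar is at most
   -E(fstar - fbase)^2.  Conversely, under the law in C where
   Y(1) - Y(0) = fstar(X) exactly, any f has relative risk
   E(fstar - f)^2 - E(fstar - fbase)^2.  Hence fstar is minimax, and any other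
   minimiser agrees with fstar Q_X-almost everywhere. *)

Section sqr_integrable.
Context d (T : measurableType d) (R : realType).
Variable mu : {measure set T -> \bar R}.

Definition sqr_integrable (u : T -> R) :=
  measurable_fun setT u /\ mu.-integrable setT (fun x => (u x ^+ 2)%:E).

Lemma EFin_Rintegral (u : T -> R) : mu.-integrable setT (EFin \o u) ->
  (\int[mu]_x u x)%:E = (\int[mu]_x (u x)%:E)%E.
Proof. by move=> iu; rewrite fineK // integrable_fin_num. Qed.

Lemma integrableZl_EFin (k : R) (u : T -> R) :
  mu.-integrable setT (EFin \o u) ->
  mu.-integrable setT (EFin \o (fun x => k * u x)).
Proof.
move=> iu; have := integrableZl measurableT k iu.
by apply: eq_integrable measurableT _ _ _ => x _; rewrite /= EFinM.
Qed.

Lemma sqr_integrable_integrableM u v : sqr_integrable u -> sqr_integrable v ->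
  mu.-integrable setT (EFin \o (fun x => u x * v x)).
Proof.
move=> [mesu iu] [mesv iv].
apply: (le_integrable measurableT _ _ (integrableD measurableT iu iv)).
  by apply/measurable_EFinP; exact: measurable_funM.
move=> x _ /=; rewrite lee_fin normrM.
rewrite [X in _ <= X]ger0_norm ?addr_ge0 ?sqr_ge0 //.
rewrite -(real_normK (num_real (u x))) -(real_normK (num_real (v x))).
have := sqr_ge0 (`|u x| - `|v x|); have := normr_ge0 (u x).
have := normr_ge0 (v x); nra.
Qed.

Lemma integrableB_sqr u v : sqr_integrable u -> sqr_integrable v ->
  mu.-integrable setT (EFin \o (fun x => u x ^+ 2 - v x ^+ 2)).
Proof.
move=> [_ iu] [_ iv].
by apply: eq_integrable measurableT _ _ _ (integrableB measurableT iu iv).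
Qed.

Lemma sqr_integrableD u v : sqr_integrable u -> sqr_integrable v ->
  sqr_integrable (fun x => u x + v x).
Proof.
move=> hu hv; have iuv := sqr_integrable_integrableM hu hv.
case: hu hv => [mesu iu] [mesv iv]; split; first exact: measurable_funD.
have iu2v := integrableD measurableT (integrableD measurableT iu
  (integrableZl_EFin 2 iuv)) iv.
apply: eq_integrable measurableT _ _ _ iu2v => x _.
by rewrite /= -!EFinD; congr EFin; ring.
Qed.

Lemma sqr_integrableZ (c : R) u : sqr_integrable u ->
  sqr_integrable (fun x => c * u x).
Proof.
case=> mesu iu; split; first exact: measurable_funM.
apply: eq_integrable measurableT _ _ _ (integrableZl_EFin (c ^+ 2) iu).
by move=> x _ /=; rewrite exprMn.
Qed.

Lemma sqr_integrableB u v : sqr_integrable u -> sqr_integrable v ->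
  sqr_integrable (fun x => u x - v x).
Proof.
move=> hu hv; have := sqr_integrableD hu (sqr_integrableZ (-1) hv).
by under eq_fun do rewrite mulN1r.
Qed.

Lemma sqr_integrable_sum (I : Type) (r : seq I) (u : I -> T -> R) :
  (forall i, sqr_integrable (u i)) ->
  sqr_integrable (fun x => \sum_(i <- r) u i x).
Proof.
move=> hu; elim: r => [|i r IH].
  under eq_fun do rewrite big_nil; split; first exact: measurable_cst.
  by under eq_fun do rewrite expr0n; exact: integrable0.
under eq_fun do rewrite big_cons; exact: sqr_integrableD.
Qed.

Lemma Rintegral_quadratic u v (a b c : R) :
  sqr_integrable u -> sqr_integrable v ->
  \int[mu]_x (a * u x ^+ 2 + b * (u x * v x) + c * v x ^+ 2) =
  a * \int[mu]_x (u x ^+ 2) + b * \int[mu]_x (u x * v x)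
    + c * \int[mu]_x (v x ^+ 2).
Proof.
move=> hu hv; have iuv := sqr_integrable_integrableM hu hv.
case: hu hv => [_ iu] [_ iv].
rewrite RintegralD //; last exact: integrableZl_EFin.
  rewrite RintegralD //; try exact: integrableZl_EFin.
  by rewrite !RintegralZl.
apply: eq_integrable measurableT _ _ _ (integrableD measurableT
  (integrableZl_EFin a iu) (integrableZl_EFin b iuv)) => x _.
by rewrite /= EFinD.
Qed.

Lemma sqr_integrable_Rintegral_eq0 u : sqr_integrable u ->
  \int[mu]_x (u x ^+ 2) = 0 -> {ae mu, forall x, u x = 0}.
Proof.
move=> [mesu iu] u0.
have mu2 : measurable_fun setT (fun x => (u x ^+ 2)%:E).
  by apply/measurable_EFinP; exact: measurable_funX.
have [+ _] := ae_eq_integral_abs mu measurableT mu2.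
have -> : (\int[mu]_x `|(u x ^+ 2)%:E| = 0)%E.
  under eq_integral do rewrite gee0_abs ?lee_fin ?sqr_ge0 //.
  by rewrite -EFin_Rintegral // u0.
move=> /(_ erefl); apply: filterS => x /(_ I) /= /eqP.
by rewrite eqe sqrf_eq0 => /eqP.
Qed.

End sqr_integrable.

Lemma sqr_integrable_integrable d (T : measurableType d) (R : realType)
    (mu : {finite_measure set T -> \bar R}) (u : T -> R) :
  sqr_integrable mu u -> mu.-integrable setT (EFin \o u).
Proof.
case=> mesu iu.
have i1u := integrableD measurableT
  (finite_measure_integrable_cst mu 1 measurableT) iu.
apply: (le_integrable measurableT _ _ i1u); first exact/measurable_EFinP.
move=> x _; rewrite /= lee_fin [X in _ <= X]ger0_norm ?addr_ge0 ?sqr_ge0 //.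
rewrite -(real_normK (num_real (u x))); have := normr_ge0 (u x); nra.
Qed.

Lemma cvg_integral_mul_nnsfun_approx d1 d2 (W : measurableType d1)
    (X : measurableType d2) (R : realType) (nu : {measure set W -> \bar R})
    (b : W -> R) (k : W -> X) (h : X -> R)
    (mh : measurable_fun setT (EFin \o h)) :
  measurable_fun setT b -> measurable_fun setT k -> (forall x, 0 <= h x) ->
  nu.-integrable setT (fun z => (b z * h (k z))%:E) ->
  (fun n => \int[nu]_z (b z * nnsfun_approx measurableT mh n (k z))%:E)%E
    @ \oo --> (\int[nu]_z (b z * h (k z))%:E)%E.
Proof.
move=> mb mk h0 ibh; set phi := nnsfun_approx measurableT mh.
have h0' x : setT x -> (0 <= (EFin \o h) x)%E by rewrite lee_fin.
have phi_le n x : phi n x <= h x.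
  by rewrite -lee_fin /phi nnsfun_approxE; exact: le_approx.
have [] // := @dominated_convergence _ _ _ nu setT measurableT
  (fun n z => (b z * phi n (k z))%:E) _ _ _ (measurable_int _ ibh) _
  (integrable_abse ibh).
- move=> n; apply/measurable_EFinP; apply: measurable_funM => //.
  exact: measurableT_comp (measurable_funPT (phi n)) mk.
- apply: aeW => z _; rewrite EFinM.
  under eq_fun do rewrite EFinM.
  exact/cvgeZl/(cvg_nnsfun_approx measurableT mh h0').
- apply: aeW => z n _; rewrite /= lee_fin !normrM ler_wpM2l //.
  by rewrite !ger0_norm.
Qed.

Section law_transfer.
Context d1 d2 (Z : measurableType d1) (X : measurableType d2) (R : realType).
Variables (P : {measure set Z -> \bar R}) (mu : {measure set X -> \bar R}).
Variable pi : Z -> X.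
Hypothesis mpi : measurable_fun setT pi.
Hypothesis pi_law : forall A, measurable A -> P (pi @^-1` A) = mu A.

Let integral_law (f : X -> \bar R) :
  (\int[pushforward P pi]_x f x = \int[mu]_x f x)%E.
Proof. by apply: eq_measure_integral => A mA _; exact: pi_law. Qed.

Lemma law_integrable_comp (phi : X -> R) : measurable_fun setT phi ->
  mu.-integrable setT (EFin \o phi) ->
  P.-integrable setT (EFin \o (phi \o pi)).
Proof.
move=> mphi /integrableP[_ iphi]; apply/integrableP; split.
  by apply/measurable_EFinP; exact: measurableT_comp mphi mpi.
have mphi' : measurable_fun setT (abse \o (EFin \o phi)).
  by apply: measurableT_comp => //; exact/measurable_EFinP.
by move: iphi; rewrite -integral_law ge0_integral_pushforward.
Qed.

Lemma law_integral_comp (phi : X -> R) : measurable_fun setT phi ->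
  mu.-integrable setT (EFin \o phi) ->
  (\int[P]_z (phi (pi z))%:E = \int[mu]_x (phi x)%:E)%E.
Proof.
move=> mphi iphi; rewrite -integral_law integral_pushforward //.
- exact/measurable_EFinP.
- exact: law_integrable_comp.
Qed.

End law_transfer.

Section cond_expectation_transfer.
Context d1 d2 (Z : measurableType d1) (X : measurableType d2) (R : realType).
Variables (P : {measure set Z -> \bar R}) (mu : {measure set X -> \bar R}).
Variables (pi : Z -> X) (a : Z -> R) (g : X -> R).
Hypotheses (mpi : measurable_fun setT pi) (ma : measurable_fun setT a)
  (mg : measurable_fun setT g).
Hypotheses (ia : P.-integrable setT (EFin \o a))
  (ig : mu.-integrable setT (EFin \o g)).
Hypothesis a_cond_g : forall A, measurable A ->
  (\int[P]_(z in pi @^-1` A) (a z)%:E = \int[mu]_(x in A) (g x)%:E)%E.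

Let integrable_mul_indic d (T : measurableType d)
    (nu : {measure set T -> \bar R}) (b : T -> R) (B : set T) :
  measurable B -> measurable_fun setT b -> nu.-integrable setT (EFin \o b) ->
  nu.-integrable setT (fun z => (b z * \1_B z)%:E).
Proof.
move=> mB mb ib; apply: (le_integrable measurableT _ _ ib).
  by apply/measurable_EFinP; apply: measurable_funM.
move=> z _; rewrite /= lee_fin normrM indicE.
by case: (z \in B); rewrite ?normr1 ?normr0 ?mulr1 ?mulr0.
Qed.

Let patch_EFin_indic (T : Type) (A : set T) (f : T -> R) :
  (EFin \o f) \_ A = (fun z => (f z * \1_A z)%:E).
Proof.
by apply/funext => z; rewrite /patch indicE; case: ifP; rewrite ?mulr1 ?mulr0.
Qed.

Let integrable_mul_le d (T : measurableType d)
    (nu : {measure set T -> \bar R}) (b : T -> R) (pr : T -> X) (k h : X -> R) :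
  measurable_fun setT b -> measurable_fun setT pr -> measurable_fun setT k ->
  (forall x, `|k x| <= `|h x|) ->
  nu.-integrable setT (fun z => (b z * h (pr z))%:E) ->
  nu.-integrable setT (fun z => (b z * k (pr z))%:E).
Proof.
move=> mb mpr mk kh ibh; apply: (le_integrable measurableT _ _ ibh).
  apply/measurable_EFinP; apply: measurable_funM => //.
  exact: measurableT_comp.
by move=> z _; rewrite /= lee_fin !normrM ler_wpM2l.
Qed.

Lemma integral_mul_comp_indic A : measurable A ->
  (\int[P]_z (a z * \1_A (pi z))%:E = \int[mu]_x (g x * \1_A x)%:E)%E.
Proof.
move=> mA; have := a_cond_g mA.
by rewrite integral_mkcond [RHS]integral_mkcond !patch_EFin_indic.
Qed.

Lemma integral_mul_comp_sfun (phi : {sfun X >-> R}) :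
  (\int[P]_z (a z * phi (pi z))%:E = \int[mu]_x (g x * phi x)%:E)%E.
Proof.
set s := finmap.enum_fset (fset_set (range phi)).
pose A i := phi @^-1` [set s`_i].
have mA i : measurable (A i) by exact: measurable_sfunP.
have mpiA i : measurable (pi @^-1` A i).
  by rewrite -[X in measurable X]setTI; exact: mpi.
have split_sfun T (b : T -> R) (k : T -> X) :
    (fun z => (b z * phi (k z))%:E) =
    (fun z => \sum_(i < size s) ((s`_i)%:E * (b z * \1_(A i) (k z))%:E))%E.
  apply/funext => z; rewrite (fimfunEord phi (k z)) mulr_sumr sumEFin.
  by congr EFin; apply: eq_bigr => i _; rewrite mulrCA.
rewrite (split_sfun _ a pi) (split_sfun _ g id).
have iPA i : P.-integrable setT (fun z => (a z * \1_(A i) (pi z))%:E).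
  exact: (integrable_mul_indic (mpiA i) ma ia).
have imuA i : mu.-integrable setT (fun x => (g x * \1_(A i) x)%:E).
  exact: integrable_mul_indic.
rewrite !integral_sum //; try by move=> i; apply: integrableZl.
by apply: eq_bigr => i _; rewrite !integralZl // integral_mul_comp_indic.
Qed.

Lemma integral_mul_comp_ge0 (h : X -> R) : measurable_fun setT h ->
  (forall x, 0 <= h x) ->
  P.-integrable setT (fun z => (a z * h (pi z))%:E) ->
  mu.-integrable setT (fun x => (g x * h x)%:E) ->
  (\int[P]_z (a z * h (pi z))%:E = \int[mu]_x (g x * h x)%:E)%E.
Proof.
move=> mh h0 iP imu; have mEh : measurable_fun setT (EFin \o h).
  exact/measurable_EFinP.
(* both sides are limits along the same simple approximations of h *)
have cvgP := cvg_integral_mul_nnsfun_approx mEh ma mpi h0 iP.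
have cvgmu := cvg_integral_mul_nnsfun_approx (k := id) mEh mg
  (@measurable_id _ _ setT) h0 imu.
move: cvgP; rewrite (eq_fun (fun n => integral_mul_comp_sfun
  (nnsfun_approx measurableT mEh n))) => cvgP.
exact: cvg_unique cvgP cvgmu.
Qed.

Lemma integral_mul_comp (h : X -> R) : measurable_fun setT h ->
  P.-integrable setT (fun z => (a z * h (pi z))%:E) ->
  mu.-integrable setT (fun x => (g x * h x)%:E) ->
  (\int[P]_z (a z * h (pi z))%:E = \int[mu]_x (g x * h x)%:E)%E.
Proof.
move=> mh iP imu.
have [mp mn] := (measurable_funrpos mh, measurable_funrneg mh).
have norm_parts x : h^\+ x + h^\- x = `|h x|.
  exact: (congr1 (fun f => f x) (funrposDneg h)).
have hp_le x : `|h^\+ x| <= `|h x|.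
  by rewrite -norm_parts ger0_norm ?funrpos_ge0 // lerDl funrneg_ge0.
have hn_le x : `|h^\- x| <= `|h x|.
  by rewrite -norm_parts ger0_norm ?funrneg_ge0 // lerDr funrpos_ge0.
have mid := @measurable_id _ X setT.
have iPp := integrable_mul_le ma mpi mp hp_le iP.
have iPn := integrable_mul_le ma mpi mn hn_le iP.
have imup := integrable_mul_le (pr := id) mg mid mp hp_le imu.
have imun := integrable_mul_le (pr := id) mg mid mn hn_le imu.
have split_parts T (b : T -> R) (k : T -> X) : (fun z => (b z * h (k z))%:E) =
    (fun z => (b z * h^\+ (k z))%:E - (b z * h^\- (k z))%:E)%E.
  by apply/funext => z; rewrite -EFinB -mulrBr -[in LHS](funrposBneg h).
rewrite (split_parts _ a pi) (split_parts _ g id) !integralB_EFin //.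
by congr (_ - _)%E; apply: integral_mul_comp_ge0.
Qed.

End cond_expectation_transfer.

Section potential_outcomes.
Context (R : realType) d (X : measurableType d) (QX : probability X R).
Local Notation Z := ((R * R) * X)%type.

Lemma measurable_ite : measurable_fun setT (@ite R d X).
Proof.
apply: measurable_funB.
  exact: measurableT_comp measurable_fst measurable_fst.
exact: measurableT_comp measurable_snd measurable_fst.
Qed.

Lemma rel_risk_cate (Q : probability Z R) (g f fb : X -> R) :
  (forall A, measurable A -> Q (snd @^-1` A) = QX A) ->
  Q.-integrable setT (fun z => (ite z ^+ 2)%:E) -> has_cate QX Q g ->
  sqr_integrable QX g -> sqr_integrable QX f -> sqr_integrable QX fb ->
  rel_risk Q f fb = (\int[QX]_x ((g x - f x) ^+ 2 - (g x - fb x) ^+ 2)%:E)%E.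
Proof.
move=> Q_law iQ2 [ia [ig a_cond_g]] Lg Lf Lfb.
pose k x := f x ^+ 2 - fb x ^+ 2; pose h x := f x - fb x.
have Lh : sqr_integrable QX h by exact: sqr_integrableB.
have mk : measurable_fun setT k.
  by apply: measurable_funB; apply: measurable_funX; [case: Lf|case: Lfb].
have ik : QX.-integrable setT (EFin \o k) by exact: integrableB_sqr.
have ikQ := law_integrable_comp measurable_snd Q_law mk ik.
have LhQ : sqr_integrable Q (h \o snd).
  split; first exact: measurableT_comp (proj1 Lh) measurable_snd.
  exact: (law_integrable_comp (phi := fun x => h x ^+ 2) measurable_snd Q_law
    (measurable_funX 2 (proj1 Lh)) Lh.2).
have iaQ := sqr_integrable_integrableM (conj measurable_ite iQ2) LhQ.
have igh := sqr_integrable_integrableM Lg Lh.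
have risk_split T (b : T -> R) (pr : T -> X) :
    (fun z => ((b z - f (pr z)) ^+ 2 - (b z - fb (pr z)) ^+ 2)%:E) =
    (fun z => (k (pr z))%:E - 2%:E * (b z * h (pr z))%:E)%E.
  by apply/funext => z; rewrite -EFinM -EFinB /k /h; congr EFin; ring.
rewrite /rel_risk (risk_split _ ite snd) (risk_split _ g id).
rewrite !integralB //; try exact: integrableZl.
rewrite !integralZl // (law_integral_comp measurable_snd Q_law mk ik).
by rewrite (integral_mul_comp measurable_snd measurable_ite (proj1 Lg) ia ig
  a_cond_g (proj1 Lh) iaQ igh).
Qed.

Lemma exists_law_cate (g : X -> R) : sqr_integrable QX g ->
  exists Q : probability Z R,
    [/\ forall A, measurable A -> Q (snd @^-1` A) = QX A,
        Q.-integrable setT (fun z => (ite z ^+ 2)%:E) & has_cate QX Q g].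
Proof.
move=> Lg; have [mg ig2] := Lg; have ig := sqr_integrable_integrable Lg.
(* the law of ((g(X), 0), X), under which Y(1) - Y(0) = g(X) exactly *)
pose phi x : Z := ((g x, 0), x).
have mphi : measurable_fun setT phi.
  by apply: measurable_fun_pair => //; exact: measurable_fun_pair.
pose Phi : {mfun X >-> Z} := MeasurableFun.Pack
  (MeasurableFun.Class (isMeasurableFun.Build _ _ _ _ phi mphi)).
have ite_phi x : ite (phi x) = g x by rewrite /ite /= subr0.
have mite2 : measurable_fun setT (fun z : Z => (ite z ^+ 2)%:E).
  by apply/measurable_EFinP; apply: measurable_funX; exact: measurable_ite.
have mite : measurable_fun setT (fun z : Z => (ite z)%:E).
  by apply/measurable_EFinP; exact: measurable_ite.
exists (distribution QX Phi); split => //.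
- apply: (integrable_pushforward mphi) => //.
  by apply: eq_integrable measurableT _ _ _ ig2 => x _ /=; rewrite ite_phi.
split; [|split => // A mA].
- apply: (integrable_pushforward mphi) => //.
  by apply: eq_integrable measurableT _ _ _ ig => x _ /=; rewrite ite_phi.
rewrite integral_pushforward //.
- by apply: eq_integral => x _; rewrite /= ite_phi.
- apply: integrableS measurableT _ _ _ => //.
  by apply: eq_integrable measurableT _ _ _ ig => x _ /=; rewrite ite_phi.
- by rewrite -[X in measurable X]setTI; exact: measurable_snd.
Qed.

End potential_outcomes.

Lemma convex_fun_set_sum (R : realType) (T : Type) (I : eqType)
    (F : set (T -> R)) (f : I -> T -> R) (r : seq I) (w : I -> R) :
  convex_fun_set F -> (forall i, F (f i)) -> (forall i, 0 <= w i) ->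
  \sum_(i <- r) w i = 1 -> F (fun x => \sum_(i <- r) w i * f i x).
Proof.
move=> convexF Ff; elim: r w => [|i r IH] w w_ge0.
  by rewrite big_nil => /eqP; rewrite eq_sym oner_eq0.
rewrite big_cons; set W := \sum_(j <- r) w j => wi_W.
have W_ge0 : 0 <= W by exact: sumr_ge0.
under eq_fun do rewrite big_cons.
have [W0|W_neq0] := eqVneq W 0.
  have /allP wr0 : all (fun j => true ==> (w j == 0)) r.
    by rewrite -psumr_eq0 -/W ?W0.
  suff -> : (fun x => w i * f i x + \sum_(j <- r) w j * f j x) = f i by [].
  apply/funext => x; rewrite big1_seq ?addr0; last first.
    by move=> j /wr0 /eqP ->; rewrite mul0r.
  by move: wi_W; rewrite W0 addr0 => ->; rewrite mul1r.
have W_gt0 : 0 < W by rewrite lt_def W_neq0.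
have w'_sum1 : \sum_(j <- r) w j / W = 1 by rewrite -mulr_suml divff.
have w'_ge0 j : 0 <= w j / W by exact: divr_ge0.
have := convexF _ _ (Ff i) (IH _ w'_ge0 w'_sum1) (w i).
rewrite w_ge0 (_ : 1 - w i = W) /=; last by rewrite -wi_W addrC addKr.
have -> : w i <= 1 by rewrite -wi_W lerDl.
move=> /(_ isT); congr F; apply/funext => x; congr (_ + _).
by rewrite mulr_sumr; apply: eq_bigr => j _; rewrite mulrA mulrCA divff ?mulr1.
Qed.

Lemma lin_coef_ge0 (R : realFieldType) (A B : R) :
  (forall t, 0 < t <= 1 -> 0 <= t ^+ 2 * A + 2 * t * B) -> 0 <= B.
Proof.
move=> quad_ge0; rewrite leNgt; apply/negP => B_lt0.
have A_le := ler_norm A; have A_ge0 := normr_ge0 A.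
pose t := - B / (`|A| + 1).
have t_gt0 : 0 < t by rewrite divr_gt0 ?oppr_gt0 // ltr_wpDl.
have tA : t * (`|A| + 1) = - B by rewrite divfK // gt_eqF // ltr_wpDl.
have [t_le1|t_gt1] := lerP t 1.
  by have := quad_ge0 t; rewrite t_gt0 t_le1 => /(_ isT); nra.
by have := quad_ge0 1; rewrite ltr01 lexx => /(_ isT); nra.
Qed.

Lemma mix_conv (R : realType) d (T : measurableType d) (S : nat)
    (tau : 'I_S -> T -> R) (q p : 'I_S -> R) (t : R) (x : T) :
  mix tau (fun s => t * q s + (1 - t) * p s) x =
  t * mix tau q x + (1 - t) * mix tau p x.
Proof.
by rewrite /mix !mulr_sumr -big_split; apply: eq_bigr => s _ /=; ring.
Qed.

Section minimax.
Context (R : realType) d (X : measurableType d) (S : nat).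
Variable QX : probability X R.
Variables (tau : 'I_S -> X -> R) (fbase : X -> R) (H : set ('I_S -> R)).
Variable qstar : 'I_S -> R.
Hypotheses (tau_L2 : forall s, sqr_integrable QX (tau s))
  (fbase_L2 : sqr_integrable QX fbase) (H_qstar : H qstar).
Local Notation fstar := (mix tau qstar).
Local Notation C := (uncertainty_set QX tau H).

Lemma sqr_integrable_mix q : sqr_integrable QX (mix tau q).
Proof.
exact: sqr_integrable_sum (fun s => sqr_integrableZ (q s) (tau_L2 s)).
Qed.

Let Lres : sqr_integrable QX (fun x => fstar x - fbase x).
Proof. exact: sqr_integrableB (sqr_integrable_mix qstar) fbase_L2. Qed.

Let Ldiff q : sqr_integrable QX (fun x => mix tau q x - fstar x).
Proof.
exact: sqr_integrableB (sqr_integrable_mix q) (sqr_integrable_mix qstar).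
Qed.

Lemma rel_risk_uncertainty_set Q f : C Q -> sqr_integrable QX f ->
  exists2 q, H q & rel_risk Q f fbase =
    (\int[QX]_x ((mix tau q x - f x) ^+ 2 - (mix tau q x - fbase x) ^+ 2))%:E.
Proof.
case=> Q_law [iQ2 [q Hq cate]] Lf; exists q => //.
have Lqf := sqr_integrableB (sqr_integrable_mix q) Lf.
have Lqb := sqr_integrableB (sqr_integrable_mix q) fbase_L2.
rewrite (rel_risk_cate Q_law iQ2 cate (sqr_integrable_mix q) Lf fbase_L2).
by rewrite EFin_Rintegral //; exact: integrableB_sqr Lqf Lqb.
Qed.

Lemma worst_rel_risk_ge f : sqr_integrable QX f ->
  ((\int[QX]_x ((fstar x - f x) ^+ 2)
     - \int[QX]_x ((fstar x - fbase x) ^+ 2))%:E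
    <= worst_rel_risk C f fbase)%E.
Proof.
move=> Lf.
have [Q [Q_law iQ2 cate]] := exists_law_cate (sqr_integrable_mix qstar).
apply: ereal_sup_ubound; exists Q => //.
by split=> //; split=> //; exists qstar.
have Lu := sqr_integrableB (sqr_integrable_mix qstar) Lf.
rewrite (rel_risk_cate Q_law iQ2 cate (sqr_integrable_mix qstar) Lf fbase_L2).
rewrite -RintegralB //; [|exact: Lu.2|exact: Lres.2].
by rewrite [RHS]EFin_Rintegral //; exact: integrableB_sqr Lu Lres.
Qed.

Section optimal_weights.
Hypothesis convex_H : convex_fun_set H.
Hypothesis qstar_opt : forall q, H q ->
  (\int[QX]_x ((mix tau qstar x - fbase x) ^+ 2)%:E
   <= \int[QX]_x ((mix tau q x - fbase x) ^+ 2)%:E)%E.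

Lemma mix_optimal_variational q : H q ->
  0 <= \int[QX]_x ((mix tau q x - fstar x) * (fstar x - fbase x)).
Proof.
move=> Hq; apply: (@lin_coef_ge0 _ (\int[QX]_x ((mix tau q x - fstar x) ^+ 2))).
move=> t /andP[t_gt0 t_le1].
(* compare qstar with the weights qt on the segment towards q *)
pose qt s := t * q s + (1 - t) * qstar s.
have Hqt : H qt by apply: convex_H; rewrite ?(ltW t_gt0).
have Lqt := sqr_integrableB (sqr_integrable_mix qt) fbase_L2.
have := qstar_opt Hqt.
rewrite -!EFin_Rintegral ?lee_fin; [|exact: Lqt.2|exact: Lres.2].
have -> : \int[QX]_x ((mix tau qt x - fbase x) ^+ 2) =
    \int[QX]_x (t ^+ 2 * (mix tau q x - fstar x) ^+ 2
      + 2 * t * ((mix tau q x - fstar x) * (fstar x - fbase x))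
      + 1 * (fstar x - fbase x) ^+ 2).
  by apply: eq_Rintegral => x _; rewrite mix_conv; ring.
by rewrite (Rintegral_quadratic _ _ _ (Ldiff q) Lres); lra.
Qed.

Lemma worst_rel_risk_mix_le : (worst_rel_risk C fstar fbase <=
  (- \int[QX]_x ((fstar x - fbase x) ^+ 2))%:E)%E.
Proof.
apply: ub_ereal_sup => _ [Q CQ <-].
have [q Hq ->] := rel_risk_uncertainty_set CQ (sqr_integrable_mix qstar).
have := mix_optimal_variational Hq; rewrite lee_fin.
have -> : \int[QX]_x ((mix tau q x - fstar x) ^+ 2
                      - (mix tau q x - fbase x) ^+ 2) =
    \int[QX]_x (0 * (mix tau q x - fstar x) ^+ 2
      + -2 * ((mix tau q x - fstar x) * (fstar x - fbase x))
      + -1 * (fstar x - fbase x) ^+ 2).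
  by apply: eq_Rintegral => x _; ring.
by rewrite (Rintegral_quadratic _ _ _ (Ldiff q) Lres); lra.
Qed.

End optimal_weights.
End minimax.

Theorem proposition2 (R : realType) (d : measure_display) (X : measurableType d)
  (S : nat) (QX : probability X R) (tau : 'I_S -> X -> R) (fbase : X -> R)
  (F : set (X -> R)) (H : set ('I_S -> R)) :
  (forall s, measurable_fun setT (tau s) /\
             QX.-integrable setT (fun x => (tau s x ^+ 2)%:E)) ->
  measurable_fun setT fbase ->
  QX.-integrable setT (fun x => (fbase x ^+ 2)%:E) ->
  (forall f, F f -> measurable_fun setT f /\
                    QX.-integrable setT (fun x => (f x ^+ 2)%:E)) ->
  convex_fun_set F -> (forall s, F (tau s)) ->
  H `<=` @simplex R S -> convex_fun_set H ->
  forall qstar : 'I_S -> R, H qstar ->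
  (forall q, H q ->
     (\int[QX]_x ((mix tau qstar x - fbase x) ^+ 2)%:E
      <= \int[QX]_x ((mix tau q x - fbase x) ^+ 2)%:E)%E) ->
  let fstar := mix tau qstar in
  let C := uncertainty_set QX tau H in
  [/\ F fstar,
      (forall f, F f -> (worst_rel_risk C fstar fbase <= worst_rel_risk C f fbase)%E) &
      (forall f, F f -> (worst_rel_risk C f fbase <= worst_rel_risk C fstar fbase)%E ->
         {ae QX, forall x, f x = fstar x})].
Proof.
move=> tau_L2 mfbase ifbase F_L2 convex_F F_tau H_simplex convex_H qstar H_qstar
  qstar_opt fstar C.
have fbase_L2 : sqr_integrable QX fbase by split.
have [qstar_ge0 qstar_sum1] := H_simplex _ H_qstar.
have worst_fstar :=
  worst_rel_risk_mix_le tau_L2 fbase_L2 H_qstar convex_H qstar_opt.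
have worst_f f (Ff : F f) :=
  worst_rel_risk_ge tau_L2 fbase_L2 H_qstar (F_L2 f Ff).
have dist_ge0 f : 0 <= \int[QX]_x ((fstar x - f x) ^+ 2).
  by apply: Rintegral_ge0 => x _; exact: sqr_ge0.
split => [|f Ff|f Ff worst_le].
- exact: convex_fun_set_sum convex_F F_tau qstar_ge0 qstar_sum1.
- apply: le_trans worst_fstar (le_trans _ (worst_f f Ff)).
  by rewrite lee_fin; have := dist_ge0 f; lra.
have Lu := sqr_integrableB (sqr_integrable_mix tau_L2 qstar) (F_L2 f Ff).
have := le_trans (worst_f f Ff) (le_trans worst_le worst_fstar).
rewrite lee_fin => dist_le0.
have /(sqr_integrable_Rintegral_eq0 Lu) : \int[QX]_x ((fstar x - f x) ^+ 2) = 0.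
  by have := dist_ge0 f; lra.
by apply: filterS => x /subr0_eq.
Qed.
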